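(* Let $S$ and $T$ be semigroups such that for each $b\in T$ there exist $a\in S$ and a homomorphism $\phi:S\to T$ with $a\phi=b$ and $\mathbf{r}_S(a)\phi=\mathbf{r}_T(b)$, where $\mathbf{r}_S(a)\phi=\{(s\phi,t\phi)\mid (s,t)\in\mathbf{r}_S(a)\}$. If $S$ is finitely right equated then so is $T$.
   Context: For a semigroup $S$ and $a\in S$, $\mathbf{r}_S(a)=\{(s,t)\in S\times S\mid as=at\}$; $S$ is finitely right equated if each $\mathbf{r}_S(a)$ is finitely generated as a right congruence. *)

From Stdlib Require Import List.

Record semigroup := Semigroup {
  sg_car :> Type;
  sg_op : sg_car -> sg_car -> sg_car;
  sg_opA : forall x y z, sg_op x (sg_op y z) = sg_op (sg_op x y) z
}.
Arguments sg_op {s} _ _.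

Definition rann {S : semigroup} (a : S) : S -> S -> Prop :=
  fun s t => sg_op a s = sg_op a t.

Definition is_right_congruence {S : semigroup} (rho : S -> S -> Prop) : Prop :=
  (forall s, rho s s) /\
  (forall s t, rho s t -> rho t s) /\
  (forall s t u, rho s t -> rho t u -> rho s u) /\
  (forall s t u, rho s t -> rho (sg_op s u) (sg_op t u)).

Definition right_cong_gen {S : semigroup} (X : list (S * S)) : S -> S -> Prop :=
  fun s t => forall rho : S -> S -> Prop, is_right_congruence rho ->
    (forall p, In p X -> rho (fst p) (snd p)) -> rho s t.

Definition fg_right_congruence {S : semigroup} (rho : S -> S -> Prop) : Prop :=
  exists X : list (S * S), forall s t, rho s t <-> right_cong_gen X s t.

Definition finitely_right_equated (S : semigroup) : Prop :=
  forall a : S, fg_right_congruence (rann a).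

Definition is_hom {S T : semigroup} (phi : S -> T) : Prop :=
  forall x y, phi (sg_op x y) = sg_op (phi x) (phi y).

Definition rel_image {S T : semigroup} (phi : S -> T) (rho : S -> S -> Prop)
  : T -> T -> Prop :=
  fun x y => exists s t, rho s t /\ phi s = x /\ phi t = y.

(* If r_S(a) is generated by X, then r_T(b) = r_S(a)phi is generated by X phi:
   every right congruence on T containing X phi pulls back along phi to a right
   congruence on S containing X, hence containing r_S(a); conversely r_T(b) is a
   right congruence containing X phi. *)
From Stdlib Require Import List.

Definition map_pairs {S T : semigroup} (phi : S -> T) (X : list (S * S))
  : list (T * T) :=
  map (fun p => (phi (fst p), phi (snd p))) X.

Lemma rann_right_congruence {S : semigroup} (a : S) :
  is_right_congruence (rann a).
Proof.
  unfold rann; split; [|split; [|split]].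
  - reflexivity.
  - intros s t Hst; symmetry; exact Hst.
  - intros s t u Hst Htu; etransitivity; eassumption.
  - intros s t u Hst; rewrite !sg_opA, Hst; reflexivity.
Qed.

Lemma right_cong_gen_min {S : semigroup} (X : list (S * S)) rho :
  is_right_congruence rho -> (forall p, In p X -> rho (fst p) (snd p)) ->
  forall s t, right_cong_gen X s t -> rho s t.
Proof. intros Hrho HX s t Hst; exact (Hst rho Hrho HX). Qed.

Lemma right_cong_gen_base {S : semigroup} (X : list (S * S)) p :
  In p X -> right_cong_gen X (fst p) (snd p).
Proof. intros Hp rho _ HX; exact (HX p Hp). Qed.

Lemma right_congruence_preimage {S T : semigroup} (phi : S -> T) rho :
  is_hom phi -> is_right_congruence rho ->
  is_right_congruence (fun s t => rho (phi s) (phi t)).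
Proof.
  intros Hphi [Hrefl [Hsym [Htrans Hright]]].
  split; [|split; [|split]].
  - intros s; apply Hrefl.
  - intros s t; apply Hsym.
  - intros s t u; apply Htrans.
  - intros s t u Hst; rewrite !Hphi; apply Hright, Hst.
Qed.

Lemma right_cong_gen_hom {S T : semigroup} (phi : S -> T) (X : list (S * S)) :
  is_hom phi -> forall s t, right_cong_gen X s t ->
  right_cong_gen (map_pairs phi X) (phi s) (phi t).
Proof.
  intros Hphi s t Hst rho Hrho HphiX.
  apply (right_cong_gen_min X (fun s t => rho (phi s) (phi t))); [| |exact Hst].
  - exact (right_congruence_preimage phi rho Hphi Hrho).
  - intros p Hp; apply (HphiX (phi (fst p), phi (snd p))), in_map_iff.
    exists p; split; [reflexivity | exact Hp].
Qed.

Lemma fg_right_congruence_image {S T : semigroup} (phi : S -> T) rho sigma :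
  is_hom phi -> is_right_congruence sigma ->
  (forall x y, rel_image phi rho x y <-> sigma x y) ->
  fg_right_congruence rho -> fg_right_congruence sigma.
Proof.
  intros Hphi Hsigma Himg [X HX].
  exists (map_pairs phi X); intros x y; split.
  - intros Hxy; apply Himg in Hxy as (s & t & Hst & <- & <-).
    apply right_cong_gen_hom; [exact Hphi | apply HX, Hst].
  - apply right_cong_gen_min; [exact Hsigma|].
    intros p Hp; apply in_map_iff in Hp as (q & <- & Hq).
    apply Himg; exists (fst q), (snd q); split; [|split; reflexivity].
    apply HX, right_cong_gen_base, Hq.
Qed.

Theorem mainTheorem15 (S T : semigroup) :
  (forall b : T, exists (a : S) (phi : S -> T),
      is_hom phi /\ phi a = b /\
      (forall x y, rel_image phi (rann a) x y <-> rann b x y)) ->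
  finitely_right_equated S -> finitely_right_equated T.
Proof.
  intros Hann HS b.
  destruct (Hann b) as (a & phi & Hphi & _ & Himg).
  exact (fg_right_congruence_image phi (rann a) (rann b)
           Hphi (rann_right_congruence b) Himg (HS a)).
Qed.
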